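(* Let $K$ be a field, $\vartheta$ any one of the four types (left, right, pre-two-sided, two-sided), and $\mathcal A$ a $K$-algebra which is algebraic over $K$ with $\mathcal A\neq K$ (i.e., $\mathcal A\neq K\cdot 1$). Then for every proper $\vartheta$-Mathieu subspace $M$ of $\mathcal A$ there exists a maximal non-trivial $\vartheta$-Mathieu subspace of $\mathcal A$ containing $M$. In particular, $\mathcal A$ has at least one maximal non-trivial $\vartheta$-Mathieu subspace.
   Context: All algebras are associative and unital. $\mathcal A$ is algebraic over $K$ if every element is a root of a nonzero polynomial over $K$. A subspace is proper if $\neq\mathcal A$ and non-trivial if $\neq 0,\mathcal A$; a maximal non-trivial $\vartheta$-Mathieu subspace is one maximal under inclusion among non-trivial $\vartheta$-Mathieu subspaces. A $K$-subspace $V$ is a left (resp. right) Mathieu subspace if whenever $a^m\in V$ for all $m\ge1$, then for every $b\in\mathcal A$, $ba^m\in V$ (resp. $a^mb\in V$) for all sufficiently large $m$; pre-two-sided if both left and right; two-sided if whenever $a^m\in V$ for all $m\ge1$, for all $b,c\in\mathcal A$, $ba^mc\in V$ for all sufficiently large $m$. *)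

From HB Require Import structures.
From mathcomp Require Import all_boot all_order all_algebra.
Set Implicit Arguments. Unset Strict Implicit. Unset Printing Implicit Defensive.
Import GRing.Theory.
Local Open Scope ring_scope.

Inductive mtype := MLeft | MRight | MPreTwoSided | MTwoSided.

Section MathieuDefs.
Variables (K : fieldType) (A : algType K).

Definition algebraic_elt (a : A) : Prop :=
  exists p : {poly K}, p != 0 /\ (map_poly (in_alg A) p).[a] = 0.

Definition algebraic_alg : Prop := forall a : A, algebraic_elt a.

Definition subspace (V : A -> Prop) : Prop :=
  [/\ V 0, (forall x y, V x -> V y -> V (x + y)) & (forall (k : K) x, V x -> V (k *: x))].

Definition all_powers_in (V : A -> Prop) (a : A) : Prop :=
  forall m : nat, (1 <= m)%N -> V (a ^+ m).

Definition left_cond (V : A -> Prop) : Prop :=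
  forall a, all_powers_in V a ->
  forall b, exists N : nat, forall m, (N <= m)%N -> V (b * a ^+ m).

Definition right_cond (V : A -> Prop) : Prop :=
  forall a, all_powers_in V a ->
  forall b, exists N : nat, forall m, (N <= m)%N -> V (a ^+ m * b).

Definition two_sided_cond (V : A -> Prop) : Prop :=
  forall a, all_powers_in V a ->
  forall b c, exists N : nat, forall m, (N <= m)%N -> V (b * a ^+ m * c).

Definition mathieu (t : mtype) (V : A -> Prop) : Prop :=
  subspace V /\
  match t with
  | MLeft => left_cond V
  | MRight => right_cond V
  | MPreTwoSided => left_cond V /\ right_cond V
  | MTwoSided => two_sided_cond V
  end.

Definition mproper (V : A -> Prop) : Prop := exists x, ~ V x.

Definition mnontrivial (V : A -> Prop) : Prop :=
  (exists x, V x /\ x <> 0) /\ mproper V.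

Definition included (V W : A -> Prop) : Prop := forall x, V x -> W x.

Definition maximal_nontrivial_mathieu (t : mtype) (N : A -> Prop) : Prop :=
  [/\ mathieu t N, mnontrivial N &
      forall N', mathieu t N' -> mnontrivial N' -> included N N' -> included N' N].

End MathieuDefs.

(* Mathieu subspaces are closed under unions of chains: if all powers of [a]
   lie in the union, then, [a] being algebraic, they are linear combinations
   of finitely many of them, which already lie in one member of the chain.
   Properness is preserved too, since a Mathieu subspace containing [1] is
   everything.  Zorn's lemma then yields maximal elements above any
   non-trivial Mathieu subspace, and one exists as soon as [A <> K]: either
   some [x <> 0] is not a non-zero multiple of an idempotent, and the line
   [K x] only contains square-zero elements, or every non-zero element is,
   so [A] is reduced, its idempotents are central, and [A e] is a proper
   ideal for any idempotent [e <> 0, 1]. *)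
From HB Require Import structures.
From mathcomp Require Import all_boot all_order all_algebra.
From mathcomp Require Import zify boolp classical_sets.
Set Implicit Arguments.
Unset Strict Implicit.
Unset Printing Implicit Defensive.
Import GRing.Theory.
Local Open Scope ring_scope.
Local Open Scope classical_set_scope.

Lemma Zorn_bigcup_above (T : Type) (P : set (set T)) (S0 : set T) :
  P S0 ->
  (forall F : set (set T), F `<=` P -> F !=set0 -> total_on F subset ->
     P (\bigcup_(X in F) X)) ->
  exists2 S, P S /\ S0 `<=` S & forall B, P B -> S `<=` B -> B `<=` S.
Proof.
move=> PS0 chainP; pose Q V := V = set0 \/ P V /\ S0 `<=` V.
have [F FQ Ftot|S [QS Smax]] := @Zorn_bigcup _ Q.
  pose G := [set V | F V /\ P V /\ S0 `<=` V].
  have [[V0 GV0]|noG] := pselect (G !=set0).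
    right; have -> : \bigcup_(X in F) X = \bigcup_(X in G) X.
      apply/seteqP; split=> x [V FV Vx]; last by exists V => //; case: FV.
      by exists V => //; case: (FQ V FV) => [V_0|]; [rewrite V_0 in Vx|split].
    split; last by move=> x S0x; exists V0 => //; case: GV0 => _ [_]; apply.
    apply: chainP; [by move=> V [_ []] | by exists V0 |].
    by move=> V W [FV _] [FW _]; apply: Ftot.
  left; apply/seteqP; split=> [x [V FV Vx]|//].
  case: (FQ V FV) => [V_0|PV]; first by rewrite V_0 in Vx.
  by apply: noG; exists V.
have [PS S0S] : P S /\ S0 `<=` S.
  case: QS => [S_0|//]; have [S0S|nS0S] := pselect (S0 `<=` S).
    by move: S0S; rewrite S_0 subset0 => S0_0; rewrite -S0_0.
  exfalso; apply: (Smax S0); last by right; split.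
  by split=> //; rewrite S_0; apply: sub0set.
exists S => // B PB SB; apply: contrapT => nBS; apply: (Smax B); first by split.
by right; split=> //; apply: subset_trans SB.
Qed.

Lemma chain_common_member (T : Type) (F : set (set T)) (f : nat -> T) (n : nat) :
  F !=set0 -> total_on F subset ->
  (forall m, (1 <= m <= n)%N -> (\bigcup_(X in F) X) (f m)) ->
  exists2 X, F X & forall m, (1 <= m <= n)%N -> X (f m).
Proof.
move=> [X0 FX0] Ftot; elim: n => [_|n IH Ff]; first by exists X0 => // [] [].
have [X FX Xf] : exists2 X, F X & forall m, (1 <= m <= n)%N -> X (f m).
  by apply: IH => m /andP[m_gt0 le_mn]; apply: Ff; rewrite m_gt0 leqW.
have [Y FY Yf] := Ff n.+1 (leqnn _).
have lastP m : (1 <= m <= n.+1)%N -> (1 <= m <= n)%N \/ m = n.+1.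
  by case/andP=> m_gt0; rewrite leq_eqVlt ltnS m_gt0 => /orP[/eqP|]; auto.
have [XY|YX] := Ftot X Y FX FY.
  by exists Y => // m /lastP[/Xf/XY|->].
by exists X => // m /lastP[/Xf|->] //; apply: YX.
Qed.

Section MathieuSubspaces.
Variables (K : fieldType) (A : algType K).
Implicit Types (t : mtype) (V W M : A -> Prop) (a b c e x y : A).

Lemma subspace_sum V (I : Type) (r : seq I) (F : I -> A) :
  subspace V -> (forall i, V (F i)) -> V (\sum_(i <- r) F i).
Proof.
case=> V0 VD _ VF; elim: r => [|i r IH]; first by rewrite big_nil.
by rewrite big_cons; apply: VD.
Qed.

Lemma algebraic_pow_recurrence a : algebraic_elt a ->
  exists (d : nat) (c : nat -> K),
    forall k, a ^+ (d + k) = \sum_(i < d) c i *: a ^+ (i + k).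
Proof.
case=> p [p_neq0 pa_eq0]; have : (0 < size p)%N by rewrite size_poly_gt0.
case size_p: (size p) => [//|d] _.
have lc_neq0 : p`_d != 0.
  by rewrite -[d]/(d.+1.-1) -size_p -lead_coefE lead_coef_eq0.
exists d, (fun i => - (p`_i / p`_d)) => k.
have : \sum_(i < d.+1) p`_i *: a ^+ (i + k) = 0.
  transitivity (a ^+ k * (map_poly (in_alg A) p).[a]); last by rewrite pa_eq0 mulr0.
  rewrite (horner_coef_wide _ (leqnn _)) size_map_poly size_p mulr_sumr.
  apply: eq_bigr => i _.
  by rewrite coef_map /= mulr_algl -scalerAr -exprD addnC.
rewrite big_ord_recr /= => /eqP; rewrite addrC addr_eq0 => /eqP top_coef.
rewrite -[LHS]scale1r -(mulVf lc_neq0) -scalerA top_coef scalerN -scaleNr.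
rewrite scaler_sumr; apply: eq_bigr => i _.
by rewrite scalerA mulrC mulrN.
Qed.

Lemma algebraic_all_powers_in a : algebraic_elt a ->
  exists d : nat, forall V, subspace V ->
    (forall m, (1 <= m <= d)%N -> V (a ^+ m)) -> all_powers_in V a.
Proof.
case/algebraic_pow_recurrence => d [c rec]; exists d => V sV Vlow m.
elim: m {-2}m (leqnn m) => [|n IH] m le_mn m_gt0.
  by rewrite leqn0 in le_mn; rewrite (eqP le_mn) in m_gt0.
have [le_md|lt_dm] := leqP m d; first by apply: Vlow; rewrite m_gt0.
have [_ _ VZ] := sV; rewrite -(subnKC (ltnW lt_dm)) rec.
by apply: subspace_sum => // i; apply: VZ; apply: IH; have := ltn_ord i; lia.
Qed.

Definition eventually (P : nat -> Prop) : Prop :=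
  exists N : nat, forall m, (N <= m)%N -> P m.

Definition mathieu_at t V a : Prop :=
  match t with
  | MLeft => forall b, eventually (fun m => V (b * a ^+ m))
  | MRight => forall b, eventually (fun m => V (a ^+ m * b))
  | MPreTwoSided => forall b,
      eventually (fun m => V (b * a ^+ m)) /\ eventually (fun m => V (a ^+ m * b))
  | MTwoSided => forall b c, eventually (fun m => V (b * a ^+ m * c))
  end.

Lemma mathieuE t V :
  mathieu t V <-> subspace V /\ forall a, all_powers_in V a -> mathieu_at t V a.
Proof.
case: t; rewrite /mathieu /=; try by [].
split=> [[sV [VL VR]]|[sV VLR]]; split=> //.
  by move=> a Va b; split; [apply: VL | apply: VR].
by split=> a Va b; have [] := VLR a Va b.
Qed.

Lemma mathieu_at_mono t V W a :
  included V W -> mathieu_at t V a -> mathieu_at t W a.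
Proof.
move=> VW; have ev P Q : (forall m, P m -> Q m) -> eventually P -> eventually Q.
  by move=> PQ [N PN]; exists N => m /PN /PQ.
case: t => /= Va b; try by apply: ev (Va b) => m /VW.
  by have [VL VR] := Va b; split; [apply: ev VL | apply: ev VR] => m /VW.
by move=> c; apply: ev (Va b c) => m /VW.
Qed.

Lemma two_sided_mathieu t V : subspace V -> two_sided_cond V -> mathieu t V.
Proof.
move=> sV V2; apply/mathieuE; split=> // a Va.
have VL b : eventually (fun m => V (b * a ^+ m)).
  by have [N VN] := V2 a Va b 1; exists N => m /VN; rewrite mulr1.
have VR b : eventually (fun m => V (a ^+ m * b)).
  by have [N VN] := V2 a Va 1 b; exists N => m /VN; rewrite mul1r.
by case: t => /=; [exact: VL | exact: VR | split | exact: V2 a Va].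
Qed.

Lemma all_powers_in1 V : V 1 -> all_powers_in V 1.
Proof. by move=> V1 m _; rewrite expr1n. Qed.

Lemma mathieu_full t V : mathieu t V -> V 1 -> forall x, V x.
Proof.
case/mathieuE=> _ Vat /all_powers_in1/Vat V1 x; case: t {Vat} V1 => /= V1.
- by have [N VN] := V1 x; have := VN N (leqnn N); rewrite expr1n mulr1.
- by have [N VN] := V1 x; have := VN N (leqnn N); rewrite expr1n mul1r.
- by have [[N VN] _] := V1 x; have := VN N (leqnn N); rewrite expr1n mulr1.
- by have [N VN] := V1 x 1; have := VN N (leqnn N); rewrite expr1n !mulr1.
Qed.

Lemma bigcup_chain_subspace (F : set (set A)) :
  F !=set0 -> total_on F subset -> (forall V, F V -> subspace V) ->
  subspace (\bigcup_(V in F) V).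
Proof.
move=> [V0 FV0] Ftot Fsub; split.
- by exists V0 => //; case: (Fsub V0 FV0).
- move=> x y [V FV Vx] [W FW Wy].
  have [VW|WV] := Ftot V W FV FW.
    by exists W => //; case: (Fsub W FW) => _ WD _; apply/WD/Wy/VW.
  by exists V => //; case: (Fsub V FV) => _ VD _; apply/VD/WV.
- by move=> k x [V FV Vx]; exists V => //; case: (Fsub V FV) => _ _; apply.
Qed.

Lemma bigcup_chain_powers (F : set (set A)) a :
  F !=set0 -> total_on F subset -> (forall V, F V -> subspace V) ->
  algebraic_elt a -> all_powers_in (\bigcup_(V in F) V) a ->
  exists2 V, F V & all_powers_in V a.
Proof.
move=> F0 Ftot Fsub /algebraic_all_powers_in[d Vd] Fa.
have [V FV Va] : exists2 V, F V & forall m, (1 <= m <= d)%N -> V (a ^+ m).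
  by apply: chain_common_member => // m /andP[m_gt0 _]; apply: Fa.
by exists V => //; apply: Vd => //; apply: Fsub.
Qed.

Lemma bigcup_chain_mathieu t (F : set (set A)) :
  algebraic_alg A -> F !=set0 -> total_on F subset ->
  (forall V, F V -> mathieu t V) -> mathieu t (\bigcup_(V in F) V).
Proof.
move=> alg F0 Ftot Fm; have Fsub V : F V -> subspace V by case/Fm/mathieuE.
apply/mathieuE; split; first exact: bigcup_chain_subspace.
move=> a /(bigcup_chain_powers F0 Ftot Fsub (alg a))[V FV Va].
have /mathieuE[_ /(_ a Va)] := Fm V FV.
by apply: mathieu_at_mono => x Vx; exists V.
Qed.

Lemma bigcup_chain_proper_mathieu t (F : set (set A)) :
  algebraic_alg A -> F !=set0 -> total_on F subset ->
  (forall V, F V -> mathieu t V /\ mproper V) ->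
  mathieu t (\bigcup_(V in F) V) /\ mproper (\bigcup_(V in F) V).
Proof.
move=> alg F0 Ftot FP; split.
  by apply: bigcup_chain_mathieu => // V /FP[].
exists 1 => -[V FV V1]; have [mV [x Vx]] := FP V FV.
exact/Vx/(mathieu_full mV V1).
Qed.

Definition line x : A -> Prop := fun y => exists k : K, y = k *: x.

Lemma line_subspace x : subspace (line x).
Proof.
split; first by exists 0; rewrite scale0r.
  by move=> _ _ [k ->] [j ->]; exists (k + j); rewrite scalerDl.
by move=> k _ [j ->]; exists (k * j); rewrite scalerA.
Qed.

Lemma line_powers_sqr0 x a : (forall k : K, k != 0 -> x ^+ 2 <> k *: x) ->
  all_powers_in (line x) a -> a ^+ 2 = 0.
Proof.
move=> x_sq Pa; have [k a_def] : line x a by rewrite -[a]expr1; apply: Pa.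
have [j a2_def] := Pa 2%N isT.
have [k0 | k_neq0] := eqVneq k 0; first by rewrite a_def k0 scale0r expr2 mul0r.
have [j0 | j_neq0] := eqVneq j 0; first by rewrite a2_def j0 scale0r.
exfalso; apply: (x_sq (j / k ^+ 2)); first by rewrite mulf_neq0 ?invr_eq0 ?expf_neq0.
have sq : k ^+ 2 *: x ^+ 2 = j *: x by rewrite -exprZn -a_def.
rewrite -[LHS]scale1r -(mulVf (expf_neq0 2 k_neq0)) -[in LHS]scalerA sq scalerA.
by rewrite mulrC.
Qed.

Lemma sqr0_two_sided V : subspace V ->
  (forall a, all_powers_in V a -> a ^+ 2 = 0) -> two_sided_cond V.
Proof.
move=> [V0 _ _] sq0 a Va b c; exists 2%N => m le2m.
by rewrite -(subnKC le2m) exprD sq0 // mul0r mulr0 mul0r.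
Qed.

Lemma ideal_two_sided V : (forall b x c, V x -> V (b * x * c)) -> two_sided_cond V.
Proof. by move=> VI a Va b c; exists 1%N => m /Va; apply: VI. Qed.

Lemma reduced_idempotent_central e : (forall y, y * y = 0 -> y = 0) ->
  e * e = e -> forall b, e * b = b * e.
Proof.
move=> reduced ee b.
have fe : (1 - e) * e = 0 by rewrite mulrBl mul1r ee subrr.
have ef : e * (1 - e) = 0 by rewrite mulrBr mulr1 ee subrr.
have ebf : e * b * (1 - e) = 0.
  by apply: reduced; rewrite -!mulrA (mulrA (1 - e)) fe mul0r !mulr0.
have fbe : (1 - e) * b * e = 0.
  by apply: reduced; rewrite -!mulrA (mulrA e) ef mul0r !mulr0.
rewrite mulrBr mulr1 in ebf; rewrite mulrBl mul1r mulrBl in fbe.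
by rewrite (subr0_eq ebf) (subr0_eq fbe).
Qed.

Lemma central_idempotent_nontrivial_mathieu t e : e * e = e ->
  (forall b, e * b = b * e) -> e <> 0 -> e <> 1 ->
  exists V, mathieu t V /\ mnontrivial V.
Proof.
move=> ee e_central e_neq0 e_neq1; pose V y := exists b, y = b * e.
have sV : subspace V.
  split; first by exists 0; rewrite mul0r.
    by move=> _ _ [b ->] [c ->]; exists (b + c); rewrite mulrDl.
  by move=> k _ [b ->]; exists (k *: b); rewrite scalerAl.
exists V; split.
  apply: two_sided_mathieu => //; apply: ideal_two_sided => b _ c [x ->].
  by exists (b * x * c); rewrite -!mulrA e_central.
split; first by exists e; split=> //; exists 1; rewrite mul1r.
by exists 1 => -[b one_def]; apply: e_neq1; rewrite -[e]mul1r one_def -mulrA ee.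
Qed.

Lemma exists_nontrivial_mathieu t : (exists a, forall k : K, a <> k%:A) ->
  exists V, mathieu t V /\ mnontrivial V.
Proof.
move=> [x0 x0_nscalar].
have [[x x_sq] | no_sq] :=
  pselect (exists x, forall k : K, k != 0 -> x ^+ 2 <> k *: x).
  exists (line x); split.
    apply: two_sided_mathieu (line_subspace x) _.
    by apply: sqr0_two_sided (line_subspace x) _ => a; apply: line_powers_sqr0.
  split; last first.
    exists 1 => /all_powers_in1/(line_powers_sqr0 x_sq)/eqP.
    by rewrite expr1n oner_eq0.
  exists x; split; first by exists 1; rewrite scale1r.
  by move=> x_eq0; apply: (x_sq 1 (oner_neq0 _)); rewrite x_eq0 expr0n scaler0.
have quasi_idem x : exists2 k : K, k != 0 & x ^+ 2 = k *: x.
  by apply: contrapT => nx; apply: no_sq; exists x => k k0 xk; apply: nx; exists k.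
have reduced y : y * y = 0 -> y = 0.
  have [k k_neq0] := quasi_idem y; rewrite expr2 => -> /eqP.
  by rewrite scaler_eq0 (negPf k_neq0) => /eqP.
have [c c_neq0 x0_sq] := quasi_idem x0; pose e := c^-1 *: x0.
have x0_def : x0 = c *: e by rewrite /e scalerA divff // scale1r.
have ee : e * e = e.
  rewrite /e -scalerAl -scalerAr scalerA.
  by rewrite -[x0 * x0]expr2 x0_sq scalerA -mulrA mulVf // mulr1.
apply: (central_idempotent_nontrivial_mathieu t ee (reduced_idempotent_central reduced ee)).
  by move=> e0; apply: (x0_nscalar 0); rewrite x0_def e0 scaler0 scale0r.
by move=> e1; apply: (x0_nscalar c); rewrite x0_def e1.
Qed.

Lemma nontrivial_mathieu_above t M : (exists a, forall k : K, a <> k%:A) ->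
  mathieu t M -> mproper M -> exists S, [/\ mathieu t S, mnontrivial S & included M S].
Proof.
move=> nscalar mM pM; have [M_neq0 | M_eq0] := pselect (exists x, M x /\ x <> 0).
  by exists M; split=> //; split.
have [V [mV ntV]] := exists_nontrivial_mathieu t nscalar.
exists V; split=> // x Mx; have -> : x = 0.
  by apply: contrapT => x_neq0; apply: M_eq0; exists x.
by case: mV => -[].
Qed.

Lemma maximal_nontrivial_mathieu_above t M :
  algebraic_alg A -> (exists a, forall k : K, a <> k%:A) ->
  mathieu t M -> mproper M ->
  exists N, maximal_nontrivial_mathieu t N /\ included M N.
Proof.
move=> alg nscalar mM pM.
have [S0 [mS0 ntS0 MS0]] := nontrivial_mathieu_above nscalar mM pM.
have [|F FP F0 Ftot|N [[mN pN] S0N] Nmax] :=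
  @Zorn_bigcup_above _ (fun V => mathieu t V /\ mproper V) S0.
- by split=> //; case: ntS0.
- exact: bigcup_chain_proper_mathieu.
exists N; split; last by move=> x /MS0 /S0N.
split=> // [|N' mN' [_ pN'] NN']; last exact: Nmax.
by case: ntS0 => -[x [S0x x_neq0]] _; split=> //; exists x; split=> //; apply: S0N.
Qed.

End MathieuSubspaces.

Theorem theorem4p21 (K : fieldType) (A : algType K) (t : mtype) :
  algebraic_alg A ->
  (exists a : A, forall k : K, a <> k%:A) ->
  (forall M : A -> Prop, mathieu t M -> mproper M ->
     exists N : A -> Prop, maximal_nontrivial_mathieu t N /\ included M N) /\
  (exists N : A -> Prop, maximal_nontrivial_mathieu t N).
Proof.
move=> alg nscalar; split=> [M|]; first exact: maximal_nontrivial_mathieu_above.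
have [V [mV [_ pV]]] := exists_nontrivial_mathieu t nscalar.
have [N [maxN _]] := maximal_nontrivial_mathieu_above alg nscalar mV pV.
by exists N.
Qed.
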